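(* Consider a discounted Markov decision problem as described in the context, with discount factor $\gamma\in(0,1)$, and let $\rho\in\Delta(\mathcal{S})$. Let $\pi^{(0)}\in\Pi$ be arbitrary and consider the projected policy gradient method \[ \pi^{(k+1)}=\mathrm{proj}_{\Pi}\bigl(\pi^{(k)}-\eta_k\nabla V_\rho(\pi^{(k)})\bigr),\qquad k\ge 0, \] with constant step size $\eta_k=\frac{(1-\gamma)^3}{2\gamma|\mathcal{A}|}$ for all $k\ge0$ (i.e., the gradient is evaluated with the same distribution $\mu=\rho$ as the one used to measure performance). Then for all $k\ge1$, \[ V_\rho(\pi^{(k)})-V_\rho^\star\;\le\;\frac{128\,|\mathcal{S}|\,|\mathcal{A}|}{k\,(1-\gamma)^5}\left\|\frac{d_\rho(\pi^\star)}{\rho}\right\|_\infty^2 . \]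
   Context: A discounted Markov decision problem (in cost-minimization form) consists of a finite state set $\mathcal{S}$, a finite action set $\mathcal{A}$, transition probabilities $P(s'|s,a)$, a cost function $R:\mathcal{S}\times\mathcal{A}\to[0,1]$ (written $R_{s,a}$), and a discount factor $\gamma$. The set of (stationary randomized) policies is $\Pi=\Delta(\mathcal{A})^{|\mathcal{S}|}$, i.e. $\pi=(\pi_s)_{s\in\mathcal{S}}$ with $\pi_s$ a probability vector on $\mathcal{A}$ and $\pi_{s,a}$ the probability of action $a$ at state $s$; $\Pi$ is regarded as a subset of $\mathbf{R}^{|\mathcal{S}|\times|\mathcal{A}|}$. For $\pi\in\Pi$, $V_s(\pi)=\mathbf{E}\bigl[\sum_{t\ge0}\gamma^tR(s_t,a_t)\mid s_0=s\bigr]$ where $a_t\sim\pi_{s_t}$ and $s_{t+1}\sim P(\cdot|s_t,a_t)$; for $\rho\in\Delta(\mathcal{S})$, $V_\rho(\pi)=\sum_s\rho_sV_s(\pi)$ and $V_\rho^\star=\min_{\pi\in\Pi}V_\rho(\pi)$. $\pi^\star\in\Pi$ denotes an optimal policy, i.e. one minimizing $V_s(\cdot)$ simultaneously for all $s$ (such a policy exists). The $Q$-function is $Q_{s,a}(\pi)=R_{s,a}+\gamma\sum_{s'}P(s'|s,a)V_{s'}(\pi)$. The discounted state-visitation distribution is $d_{s,s'}(\pi)=(1-\gamma)\sum_{t\ge0}\gamma^t\Pr^\pi(s_t=s'\mid s_0=s)$ and $d_{\rho,s'}(\pi)=\sum_s\rho_sd_{s,s'}(\pi)$, giving $d_\rho(\pi)\in\Delta(\mathcal{S})$.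 The policy gradient $\nabla V_\rho(\pi)\in\mathbf{R}^{|\mathcal{S}|\times|\mathcal{A}|}$ has entries $\frac{1}{1-\gamma}d_{\rho,s}(\pi)Q_{s,a}(\pi)$. For $p,q\in\Delta(\mathcal{S})$, $\|p/q\|_\infty=\max_s p_s/q_s$ with the convention $0/0=1$ (and $c/0=+\infty$ for $c>0$). $\mathrm{proj}_\Pi$ is Euclidean projection onto $\Pi$. *)

From HB Require Import structures.
From mathcomp Require Import all_boot all_order all_algebra.
From mathcomp Require Import all_classical all_reals all_analysis.
Set Implicit Arguments. Unset Strict Implicit. Unset Printing Implicit Defensive.
Import Order.TTheory GRing.Theory Num.Theory.
Local Open Scope ring_scope.
Local Open Scope classical_set_scope.

Section MDP.
Variables (R : realType) (S A : finType).

Definition is_dist (T : finType) (p : T -> R) : Prop :=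
  (forall x, 0 <= p x) /\ \sum_(x : T) p x = 1.

Definition is_policy (pi : S -> A -> R) : Prop := forall s, is_dist (pi s).

Variables (P : S -> A -> S -> R) (Rc : S -> A -> R) (gamma : R).

Definition Ppi (pi : S -> A -> R) (s s' : S) : R := \sum_(a : A) pi s a * P s a s'.
Definition rpi (pi : S -> A -> R) (s : S) : R := \sum_(a : A) pi s a * Rc s a.

(* Pt pi t s s' = Pr^pi (s_t = s' | s_0 = s) *)
Fixpoint Pt (pi : S -> A -> R) (t : nat) (s s' : S) : R :=
  match t with
  | 0%N => (s == s')%:R
  | t'.+1 => \sum_(u : S) Pt pi t' s u * Ppi pi u s'
  end.

(* V_s(pi) = E[ sum_t gamma^t R(s_t,a_t) | s_0 = s ] *)
Definition Vs (pi : S -> A -> R) (s : S) : R :=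
  limn (fun n => \sum_(0 <= t < n) gamma ^+ t * \sum_(s' : S) Pt pi t s s' * rpi pi s').

Definition Vrho (rho : S -> R) (pi : S -> A -> R) : R :=
  \sum_(s : S) rho s * Vs pi s.

Definition Vstar (rho : S -> R) : R :=
  inf [set Vrho rho pi | pi in [set pi | is_policy pi]].

Definition Qf (pi : S -> A -> R) (s : S) (a : A) : R :=
  Rc s a + gamma * \sum_(s' : S) P s a s' * Vs pi s'.

Definition dvis (pi : S -> A -> R) (s s' : S) : R :=
  (1 - gamma) * limn (fun n => \sum_(0 <= t < n) gamma ^+ t * Pt pi t s s').

Definition drho (rho : S -> R) (pi : S -> A -> R) (s' : S) : R :=
  \sum_(s : S) rho s * dvis pi s s'.

Definition gradV (rho : S -> R) (pi : S -> A -> R) (s : S) (a : A) : R :=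
  (1 - gamma)^-1 * drho rho pi s * Qf pi s a.

Definition is_optimal (pistar : S -> A -> R) : Prop :=
  is_policy pistar /\
  forall pi, is_policy pi -> forall s, Vs pistar s <= Vs pi s.

End MDP.

Definition sqdist (R : realType) (S A : finType) (x y : S -> A -> R) : R :=
  \sum_(s : S) \sum_(a : A) (x s a - y s a) ^+ 2.

Definition is_proj_Pi (R : realType) (S A : finType) (x p : S -> A -> R) : Prop :=
  is_policy p /\ forall q, is_policy q -> sqdist x p <= sqdist x q.

(* || p / q ||_infty with conventions 0/0 = 1 and c/0 = +oo (c > 0) *)
Definition ratio_inf (R : realType) (S : finType) (p q : S -> R) : \bar R :=
  \big[Order.max/-oo%E]_(s : S)
    (if q s == 0 then (if p s == 0 then 1%E else +oo%E) else (p s / q s)%:E).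

From HB Require Import structures.
From mathcomp Require Import all_boot all_order all_algebra.
From mathcomp Require Import all_classical all_reals all_analysis.
From mathcomp Require Import ring lra.
Import Order.TTheory GRing.Theory Num.Theory.
Import numFieldNormedType.Exports.
Local Open Scope classical_set_scope.
Local Open Scope ring_scope.

(* V_rho is smooth on the product of simplices and satisfies a gradient
   domination inequality, so projected gradient descent converges at rate 1/k.
   Writing M_pi = (I - gamma P_pi)^-1 for the resolvent, the performance
   difference lemma gives V(pi') - V(pi) in terms of M_pi' and the advantages
   of pi, and the second resolvent identity M_pi' - M_pi = gamma M_pi' (P_pi' -
   P_pi) M_pi bounds the second-order remainder by gamma |A| / (1-gamma)^3
   |pi' - pi|^2.  Comparing pistar with the greedy policy for Q_pi bounds the
   gap delta = V(pi) - V(pistar) by (M / (1-gamma)) times the slope of V towards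
   the greedy policy, M = ||d_rho(pistar) / rho||_inf.  Testing the projection
   step against the step of length alpha towards the greedy policy gives
   delta' <= delta - alpha (1-gamma) / M delta + 2 gamma |A| |S| / (1-gamma)^3
   alpha^2 for every alpha in [0, 1]; the best alpha gives
   delta' <= delta - b delta^2, and such a sequence satisfies delta_k <= 1/(b k). *)

Section RealInequalities.
Context {R : realFieldType}.

Lemma norm_sum_mul_le {I : finType} (x f : I -> R) (C : R) :
  (forall i, `|f i| <= C) -> `|\sum_i x i * f i| <= (\sum_i `|x i|) * C.
Proof.
move=> fC; apply: le_trans (ler_norm_sum _ _ _) _.
by rewrite mulr_suml; apply: ler_sum => i _; rewrite normrM ler_wpM2l.
Qed.

Lemma sqr_sum_norm_le {I : finType} (y : I -> R) :
  (\sum_i `|y i|) ^+ 2 <= #|I|%:R * \sum_i y i ^+ 2.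
Proof.
have [/card0_eq I0|I_gt0] := posnP #|I|.
  by rewrite !big1 ?expr0n ?mulr0 // => i; have := I0 i; rewrite !inE.
set n : R := #|I|%:R; set z := fun i => `|y i|; set Sz := \sum_i z i.
have n_gt0 : 0 < n by rewrite ltr0n.
have E : \sum_i (n * z i - Sz) ^+ 2 = n * (n * \sum_i z i ^+ 2 - Sz ^+ 2).
  transitivity (\sum_i (n ^+ 2 * z i ^+ 2 - (2 * n * Sz) * z i + Sz ^+ 2)).
    by apply: eq_bigr => i _; ring.
  rewrite big_split sumrB /= -!mulr_sumr sumr_const -mulr_natr -/n -/Sz; ring.
have -> : \sum_i y i ^+ 2 = \sum_i z i ^+ 2.
  by apply: eq_bigr => i _; rewrite /z real_normK ?num_real.
rewrite -subr_ge0 -(pmulr_rge0 _ n_gt0) -E.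
by apply: sumr_ge0 => i _; exact: sqr_ge0.
Qed.

Lemma quadratic_decrease (d d' c D b : R) :
  0 <= d -> 0 <= c -> 0 < D -> b * (4 * D) <= c ^+ 2 -> b * d <= c / 2 ->
  (forall alpha, 0 <= alpha <= 1 -> d' <= d - alpha * c * d + D * alpha ^+ 2) ->
  d' <= d - b * d ^+ 2.
Proof.
move=> d_ge0 c_ge0 D_gt0 bD bd dec.
(* The bound is minimised at alpha = c d / (2 D); if that exceeds 1, take 1. *)
have [cd_le|cd_gt] := lerP (c * d) (2 * D).
  have twoD_gt0 : 0 < 2 * D by rewrite mulr_gt0.
  have alpha01 : 0 <= c * d / (2 * D) <= 1.
    apply/andP; split; first by rewrite divr_ge0 ?mulr_ge0 // ltW.
    by rewrite ler_pdivrMr // mul1r.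
  apply: le_trans (dec _ alpha01) _.
  have -> : d - c * d / (2 * D) * c * d + D * (c * d / (2 * D)) ^+ 2
          = d - c ^+ 2 * d ^+ 2 / (4 * D) by field; rewrite gt_eqF.
  rewrite lerD2l lerN2 ler_pdivlMr ?mulr_gt0 //.
  have := sqr_ge0 d; nra.
apply: le_trans (dec 1 _) _; first by rewrite ler01 lexx.
have : b * d ^+ 2 <= c / 2 * d by rewrite expr2 mulrA ler_wpM2r.
lra.
Qed.

Lemma decrease_rate (d : nat -> R) (b : R) : 0 < b ->
  (forall k, d k.+1 <= d k - b * d k ^+ 2) ->
  forall k, (0 < k)%N -> d k <= (b * k%:R)^-1.
Proof.
move=> b_gt0 dec.
have top x : x - b * x ^+ 2 <= (4 * b)^-1.
  rewrite -subr_ge0.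
  have -> : (4 * b)^-1 - (x - b * x ^+ 2) = b * (x - (2 * b)^-1) ^+ 2.
    by field; rewrite gt_eqF.
  by rewrite mulr_ge0 ?sqr_ge0 ?ltW.
have mono x y : x <= y -> b * (x + y) <= 1 -> x - b * x ^+ 2 <= y - b * y ^+ 2.
  move=> xy bxy; rewrite -subr_ge0.
  have -> : y - b * y ^+ 2 - (x - b * x ^+ 2) = (y - x) * (1 - b * (x + y)) by ring.
  by rewrite mulr_ge0 // subr_ge0.
have step n x : 2 <= n -> x <= (b * n)^-1 ->
    x - b * x ^+ 2 <= (b * (n + 1))^-1.
  move=> n_ge2 x_le; have n_gt0 : 0 < n by apply: lt_le_trans n_ge2.
  apply: le_trans (mono _ _ x_le _) _.
    have bn : b * (b * n)^-1 = n^-1 by field; rewrite !gt_eqF.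
    have : b * x <= n^-1 by rewrite -bn ler_pM2l.
    have : 2 / n <= 1 by rewrite ler_pdivrMr ?mul1r.
    rewrite mulrDr bn; lra.
  rewrite -subr_ge0.
  have -> : (b * (n + 1))^-1 - ((b * n)^-1 - b * (b * n)^-1 ^+ 2)
          = (b * n ^+ 2 * (n + 1))^-1.
    by field; rewrite !gt_eqF ?addr_gt0.
  by rewrite invr_ge0 ltW // !mulr_gt0 ?exprn_gt0 ?addr_gt0.
(* Prove the sharper d k <= 1 / (b (k + 1)): the monotonicity step needs
   b (x + y) <= 1, which the bound 1 / (b k) violates at k = 1. *)
suff dS k : d k.+1 <= (b * k.+2%:R)^-1.
  case=> [|k] // _; apply: le_trans (dS k) _.
  by rewrite lef_pV2 ?posrE ?mulr_gt0 ?ltr0n // ler_pM2l // ler_nat.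
elim: k => [|k IH].
  apply: le_trans (dec 0) _; apply: le_trans (top _) _.
  by rewrite lef_pV2 ?posrE ?mulr_gt0 // mulrC ler_pM2r // ler_nat.
by rewrite -natr1; apply: le_trans (dec _) (step _ _ _ IH); rewrite ler_nat.
Qed.

End RealInequalities.

Section FiniteSums.
Context {R : pzRingType} {I : finType}.

Lemma sum_delta (f : I -> R) i : \sum_j (i == j)%:R * f j = f i.
Proof.
rewrite (bigD1 i) //= eqxx mul1r big1 ?addr0 // => j.
by rewrite eq_sym => /negPf ->; rewrite mul0r.
Qed.

Lemma sum_deltar (f : I -> R) i : \sum_j f j * (j == i)%:R = f i.
Proof.
rewrite (bigD1 i) //= eqxx mulr1 big1 ?addr0 // => j.
by move=> /negPf ->; rewrite mulr0.
Qed.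

End FiniteSums.

Lemma cvg_sum_fin {R : realType} {I : finType} (f : I -> nat -> R) (l : I -> R) :
  (forall i, f i n @[n --> \oo] --> l i) ->
  \sum_i f i n @[n --> \oo] --> \sum_i l i.
Proof. by move=> fl; apply: cvg_big => //; exact: add_continuous. Qed.

Section Policies.
Context {R : realType} {S A : finType}.
Implicit Types (x y G p q : S -> A -> R).

Definition dotp x y : R := \sum_s \sum_a x s a * y s a.

Definition l1dist x y (s : S) : R := \sum_a `|y s a - x s a|.

Lemma dist_card_gt0 {T : finType} {p : T -> R} : is_dist p -> (0 < #|T|)%N.
Proof.
case=> _ p1; rewrite lt0n; apply/negP => /eqP/card0_eq T0.
move: p1; rewrite big1 => [/eqP|t _]; first by rewrite eq_sym oner_eq0.
by have := T0 t; rewrite !inE.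
Qed.

Lemma policy_le1 {p} : is_policy p -> forall s a, p s a <= 1.
Proof.
move=> p_pol s a; rewrite -(proj2 (p_pol s)) (bigD1 a) //= lerDl.
by apply: sumr_ge0 => b _; exact: (proj1 (p_pol s)).
Qed.

Lemma policy_convex p q alpha : is_policy p -> is_policy q -> 0 <= alpha <= 1 ->
  is_policy (fun s a => p s a + alpha * (q s a - p s a)).
Proof.
move=> p_pol q_pol /andP[alpha_ge0 alpha_le1] s; split.
  move=> a; have := proj1 (p_pol s) a; have := proj1 (q_pol s) a.
  have := policy_le1 p_pol s a; have := policy_le1 q_pol s a.
  nra.
rewrite big_split /= -mulr_sumr sumrB (proj2 (p_pol s)) (proj2 (q_pol s)).
by rewrite subrr mulr0 addr0.
Qed.

Lemma sqdist_policy_le p q : is_policy p -> is_policy q -> sqdist p q <= 2 * #|S|%:R.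
Proof.
move=> p_pol q_pol; apply: le_trans (_ : \sum_(s : S) 2 <= _).
  apply: ler_sum => s _.
  apply: le_trans (_ : \sum_a (p s a + q s a) <= _).
    apply: ler_sum => a _; have := proj1 (p_pol s) a; have := proj1 (q_pol s) a.
    have := policy_le1 p_pol s a; have := policy_le1 q_pol s a.
    nra.
  by rewrite big_split /= (proj2 (p_pol s)) (proj2 (q_pol s)).
by rewrite sumr_const mulr_natr.
Qed.

Lemma l1dist_le x y s : l1dist x y s <= Num.sqrt (#|A|%:R * sqdist y x).
Proof.
have l1_ge0 : 0 <= l1dist x y s by apply: sumr_ge0 => a _; exact: normr_ge0.
rewrite -(ger0_norm l1_ge0) -sqrtr_sqr.
apply: ler_wsqrtr; apply: le_trans (sqr_sum_norm_le _) _.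
rewrite ler_wpM2l ?ler0n // /sqdist (bigD1 s) //= lerDl.
by apply: sumr_ge0 => u _; apply: sumr_ge0 => a _; exact: sqr_ge0.
Qed.

Lemma sqdist_gradient_step x y G eta :
  sqdist (fun s a => x s a - eta * G s a) y =
  sqdist y x + 2 * eta * dotp G (fun s a => y s a - x s a)
  + eta ^+ 2 * \sum_s \sum_a G s a ^+ 2.
Proof.
rewrite /sqdist /dotp !mulr_sumr -!big_split; apply: eq_bigr => s _.
by rewrite !mulr_sumr -!big_split; apply: eq_bigr => a _ /=; ring.
Qed.

Lemma proj_Pi_le x G p q eta : 0 < eta ->
  is_proj_Pi (fun s a => x s a - eta * G s a) p -> is_policy q ->
  dotp G (fun s a => p s a - x s a) + sqdist p x / (2 * eta)
  <= dotp G (fun s a => q s a - x s a) + sqdist q x / (2 * eta).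
Proof.
move=> eta_gt0 [_ p_min] q_pol; have := p_min q q_pol.
rewrite !sqdist_gradient_step lerD2r => le_pq.
rewrite -(ler_pM2l (_ : 0 < 2 * eta)) ?mulr_gt0 // !mulrDr.
by rewrite !(mulrC (2 * eta)) !mulfVK ?gt_eqF ?mulr_gt0 //; lra.
Qed.

Lemma ratio_infP (p q : S -> R) : (0 < #|S|)%N -> (forall s, 0 <= q s) ->
  ratio_inf p q = +oo%E \/
  exists2 M : R, ratio_inf p q = M%:E & forall s, p s <= M * q s.
Proof.
move=> /card_gt0P[s0 _] q_ge0.
pose F s := if q s == 0 then (if p s == 0 then 1%E else +oo%E) else (p s / q s)%:E.
have le_ratio s : (F s <= ratio_inf p q)%E by exact: le_bigmax.
case E: (ratio_inf p q) => [M| |]; [right; exists M => // s | by left | exfalso].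
  move: (le_ratio s); rewrite E /F; have [->|qs_neq0] := eqVneq (q s) 0.
    by case: eqP => [->|_] //; rewrite mulr0.
  have qs_gt0 : 0 < q s by rewrite lt_neqAle eq_sym qs_neq0 q_ge0.
  by rewrite lee_fin ler_pdivrMr.
by move: (le_ratio s0); rewrite E /F; case: ifP => _; [case: ifP|].
Qed.

End Policies.

Section MDP.
Context {R : realType} {S A : finType}.
Context {P : S -> A -> S -> R} {Rc : S -> A -> R} {gamma : R}.
Hypothesis P_dist : forall s a, is_dist (P s a).
Hypothesis Rc01 : forall s a, 0 <= Rc s a <= 1.
Hypothesis gamma01 : 0 < gamma < 1.

Let gamma_gt0 : 0 < gamma. Proof. by case/andP: gamma01. Qed.
Let gamma_lt1 : gamma < 1. Proof. by case/andP: gamma01. Qed.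
Let omg_gt0 : 0 < 1 - gamma. Proof. by rewrite subr_gt0. Qed.

Local Notation V := (Vs P Rc gamma).
Local Notation Q := (Qf P Rc gamma).

(* The resolvent (I - gamma P_pi)^-1 = sum_t gamma^t P_pi^t, as the limit of
   its partial sums; [dvis pi] is [(1 - gamma) * resolvent pi] by definition. *)
Definition resolvent_trunc pi n s s' : R :=
  \sum_(0 <= t < n) gamma ^+ t * Pt P pi t s s'.

Definition resolvent pi s s' : R := limn (fun n => resolvent_trunc pi n s s').

Lemma PtSl pi t s s' : Pt P pi t.+1 s s' = \sum_u Ppi P pi s u * Pt P pi t u s'.
Proof.
elim: t s s' => [|t IH] s s'.
  by rewrite /= sum_delta sum_deltar.
transitivity (\sum_u Pt P pi t.+1 s u * Ppi P pi u s'); first by [].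
under eq_bigr do rewrite IH mulr_suml.
rewrite exchange_big /=; apply: eq_bigr => u _.
by rewrite mulr_sumr; apply: eq_bigr => w _; rewrite mulrA.
Qed.

Lemma sum_Qf pi p s :
  \sum_a p s a * Q pi s a = rpi Rc p s + gamma * \sum_u Ppi P p s u * V pi u.
Proof.
rewrite /Qf /rpi /Ppi; under eq_bigr do rewrite mulrDr.
rewrite big_split /=; congr (_ + _).
transitivity (gamma * \sum_a \sum_u p s a * P s a u * V pi u).
  rewrite mulr_sumr; apply: eq_bigr => a _.
  by rewrite !mulr_sumr; apply: eq_bigr => u _; ring.
by rewrite exchange_big /=; congr (_ * _); apply: eq_bigr => u _; rewrite mulr_suml.
Qed.

Section FixedPolicy.
Context { pi : S -> A -> R }.
Hypothesis pi_policy : is_policy pi.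

Lemma Ppi_ge0 s s' : 0 <= Ppi P pi s s'.
Proof.
by apply: sumr_ge0 => a _; rewrite mulr_ge0 ?(proj1 (pi_policy s)) ?(proj1 (P_dist s a)).
Qed.

Lemma Ppi_sum1 s : \sum_s' Ppi P pi s s' = 1.
Proof.
rewrite /Ppi exchange_big /= -[RHS](proj2 (pi_policy s)); apply: eq_bigr => a _.
by rewrite -mulr_sumr (proj2 (P_dist s a)) mulr1.
Qed.

Lemma Pt_ge0 t s s' : 0 <= Pt P pi t s s'.
Proof.
elim: t s s' => [|t IH] s s' /=; first by rewrite ler0n.
by apply: sumr_ge0 => u _; rewrite mulr_ge0 ?Ppi_ge0.
Qed.

Lemma Pt_sum1 t s : \sum_s' Pt P pi t s s' = 1.
Proof.
elim: t s => [|t IH] s.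
  by rewrite /= -[RHS](sum_delta (fun=> 1) s); apply: eq_bigr => s' _; rewrite mulr1.
rewrite /= exchange_big /= -[RHS](IH s); apply: eq_bigr => u _.
by rewrite -mulr_sumr Ppi_sum1 mulr1.
Qed.

Lemma resolvent_trunc_ge0 n s s' : 0 <= resolvent_trunc pi n s s'.
Proof. by apply: sumr_ge0 => t _; rewrite mulr_ge0 ?Pt_ge0 ?exprn_ge0 // ltW. Qed.

Lemma resolvent_trunc_row_le n s :
  \sum_s' resolvent_trunc pi n s s' <= (1 - gamma)^-1.
Proof.
rewrite /resolvent_trunc exchange_big /=.
have -> : \sum_(0 <= t < n) \sum_s' gamma ^+ t * Pt P pi t s s'
        = series (geometric 1 gamma) n.
  rewrite seriesEnat; apply: eq_bigr => t _.
  by rewrite -mulr_sumr Pt_sum1 /geometric /= mul1r mulr1.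
by rewrite -div1r geometric_le_lim // gtr0_norm.
Qed.

Lemma cvg_resolvent_trunc s s' :
  resolvent_trunc pi n s s' @[n --> \oo] --> resolvent pi s s'.
Proof.
apply: nondecreasing_is_cvgn.
  apply/nondecreasing_seqP => n; rewrite /resolvent_trunc big_nat_recr //= lerDl.
  by rewrite mulr_ge0 ?Pt_ge0 ?exprn_ge0 // ltW.
exists (1 - gamma)^-1 => _ [n _ <-]; apply: le_trans (resolvent_trunc_row_le n s).
by rewrite (bigD1 s') //= lerDl sumr_ge0 // => u _; exact: resolvent_trunc_ge0.
Qed.

Lemma resolvent_ge0 s s' : 0 <= resolvent pi s s'.
Proof.
apply: (cvgr_to_ge (cvg_resolvent_trunc s s')).
by apply: nearW => n; exact: resolvent_trunc_ge0.
Qed.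

Lemma resolvent_row_le s : \sum_s' resolvent pi s s' <= (1 - gamma)^-1.
Proof.
have := cvg_sum_fin (fun s' n => resolvent_trunc pi n s s') _ (cvg_resolvent_trunc s).
move/cvgr_to_le; apply.
by apply: nearW => n; exact: resolvent_trunc_row_le.
Qed.

Lemma resolvent_shiftE s s' (u : nat -> R) l :
  (forall n, resolvent_trunc pi n.+1 s s' = u n) -> u @ \oo --> l ->
  resolvent pi s s' = l.
Proof.
move=> truncE ul.
have shifted : u @ \oo --> resolvent pi s s'.
  have <- : (fun n => resolvent_trunc pi n.+1 s s') = u by apply: funext.
  by rewrite (cvg_shiftS (fun n => resolvent_trunc pi n s s')); exact: cvg_resolvent_trunc.
by rewrite -(cvg_lim _ ul) // -(cvg_lim _ shifted).
Qed.

Lemma resolventEl s s' :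
  resolvent pi s s' = (s == s')%:R + gamma * \sum_u Ppi P pi s u * resolvent pi u s'.
Proof.
apply: (resolvent_shiftE s s' (fun n =>
  (s == s')%:R + gamma * \sum_u Ppi P pi s u * resolvent_trunc pi n u s')).
  move=> n; rewrite /resolvent_trunc big_nat_recl // expr0 mul1r; congr (_ + _).
  under eq_bigr do rewrite PtSl mulr_sumr.
  rewrite exchange_big /= mulr_sumr; apply: eq_bigr => u _.
  by rewrite !mulr_sumr; apply: eq_bigr => t _; rewrite exprS; ring.
apply: cvgD; first exact: cvg_cst.
by apply: cvgMl_tmp; apply: cvg_sum_fin => u; apply: cvgMl_tmp; exact: cvg_resolvent_trunc.
Qed.

Lemma resolventEr s s' :
  resolvent pi s s' = (s == s')%:R + gamma * \sum_u resolvent pi s u * Ppi P pi u s'.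
Proof.
apply: (resolvent_shiftE s s' (fun n =>
  (s == s')%:R + gamma * \sum_u resolvent_trunc pi n s u * Ppi P pi u s')).
  move=> n; rewrite /resolvent_trunc big_nat_recl // expr0 mul1r; congr (_ + _).
  under eq_bigr do rewrite [Pt _ _ _.+1 _ _]/= mulr_sumr.
  rewrite exchange_big /= mulr_sumr; apply: eq_bigr => u _.
  by rewrite mulr_suml !mulr_sumr; apply: eq_bigr => t _; rewrite exprS; ring.
apply: cvgD; first exact: cvg_cst.
by apply: cvgMl_tmp; apply: cvg_sum_fin => u; apply: cvgMr_tmp; exact: cvg_resolvent_trunc.
Qed.

Lemma resolvent_diag_ge1 s : 1 <= resolvent pi s s.
Proof.
rewrite resolventEl eqxx lerDl mulr_ge0 ?(ltW gamma_gt0) //.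
by apply: sumr_ge0 => u _; rewrite mulr_ge0 ?Ppi_ge0 ?resolvent_ge0.
Qed.

Lemma Vs_resolvent s : V pi s = \sum_s' resolvent pi s s' * rpi Rc pi s'.
Proof.
apply/cvg_lim => //.
have -> : (fun n => \sum_(0 <= t < n) gamma ^+ t * \sum_s' Pt P pi t s s' * rpi Rc pi s')
        = (fun n => \sum_s' resolvent_trunc pi n s s' * rpi Rc pi s').
  apply: funext => n; rewrite /resolvent_trunc.
  under eq_bigr do rewrite mulr_sumr.
  rewrite exchange_big /=; apply: eq_bigr => s' _.
  by rewrite mulr_suml; apply: eq_bigr => t _; rewrite mulrA.
by apply: cvg_sum_fin => s'; apply: cvgMr_tmp; exact: cvg_resolvent_trunc.
Qed.

Lemma resolvent_mulEl (f : S -> R) s :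
  \sum_s' resolvent pi s s' * f s' =
  f s + gamma * \sum_u Ppi P pi s u * \sum_s' resolvent pi u s' * f s'.
Proof.
under eq_bigr do rewrite resolventEl mulrDl.
rewrite big_split /= sum_delta; congr (_ + _).
transitivity (gamma * \sum_s' \sum_u Ppi P pi s u * (resolvent pi u s' * f s')).
  rewrite mulr_sumr; apply: eq_bigr => s' _.
  by rewrite -mulrA mulr_suml; congr (_ * _); apply: eq_bigr => u _; rewrite mulrA.
by rewrite exchange_big /=; congr (_ * _); apply: eq_bigr => u _; rewrite mulr_sumr.
Qed.

Lemma resolvent_mulEr (f : S -> R) s :
  \sum_s' resolvent pi s s' * f s' =
  f s + gamma * \sum_u resolvent pi s u * \sum_s' Ppi P pi u s' * f s'.
Proof.
under eq_bigr do rewrite resolventEr mulrDl.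
rewrite big_split /= sum_delta; congr (_ + _).
transitivity (gamma * \sum_s' \sum_u resolvent pi s u * (Ppi P pi u s' * f s')).
  rewrite mulr_sumr; apply: eq_bigr => s' _.
  by rewrite -mulrA mulr_suml; congr (_ * _); apply: eq_bigr => u _; rewrite mulrA.
by rewrite exchange_big /=; congr (_ * _); apply: eq_bigr => u _; rewrite mulr_sumr.
Qed.

Lemma Vs_bellman s : V pi s = rpi Rc pi s + gamma * \sum_u Ppi P pi s u * V pi u.
Proof.
rewrite Vs_resolvent resolvent_mulEl.
by under [in RHS]eq_bigr do rewrite Vs_resolvent.
Qed.

Lemma Vs_Qf s : V pi s = \sum_a pi s a * Q pi s a.
Proof. by rewrite sum_Qf -Vs_bellman. Qed.

Lemma rpi_ge0 s : 0 <= rpi Rc pi s.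
Proof.
apply: sumr_ge0 => a _; rewrite mulr_ge0 ?(proj1 (pi_policy s)) //.
by case/andP: (Rc01 s a).
Qed.

Lemma rpi_le1 s : rpi Rc pi s <= 1.
Proof.
rewrite -(proj2 (pi_policy s)); apply: ler_sum => a _.
by rewrite ler_piMr ?(proj1 (pi_policy s)) //; case/andP: (Rc01 s a).
Qed.

Lemma Vs_ge0 s : 0 <= V pi s.
Proof.
by rewrite Vs_resolvent sumr_ge0 // => u _; rewrite mulr_ge0 ?resolvent_ge0 ?rpi_ge0.
Qed.

Lemma Vs_le s : V pi s <= (1 - gamma)^-1.
Proof.
rewrite Vs_resolvent; apply: le_trans (resolvent_row_le s); apply: ler_sum => u _.
by rewrite ler_piMr ?resolvent_ge0 ?rpi_le1.
Qed.

Lemma Qf_ge0 s a : 0 <= Q pi s a.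
Proof.
rewrite addr_ge0 ?mulr_ge0 ?(ltW gamma_gt0) //; first by case/andP: (Rc01 s a).
by apply: sumr_ge0 => u _; rewrite mulr_ge0 ?Vs_ge0 ?(proj1 (P_dist s a)).
Qed.

Lemma Qf_le s a : Q pi s a <= (1 - gamma)^-1.
Proof.
have -> : (1 - gamma)^-1 = 1 + gamma * (1 - gamma)^-1 by field; rewrite gt_eqF.
apply: lerD; first by case/andP: (Rc01 s a).
rewrite ler_wpM2l ?(ltW gamma_gt0) //.
apply: le_trans (_ : \sum_u P s a u * (1 - gamma)^-1 <= _).
  by apply: ler_sum => u _; rewrite ler_wpM2l ?Vs_le ?(proj1 (P_dist s a)).
by rewrite -mulr_suml (proj2 (P_dist s a)) mul1r.
Qed.

End FixedPolicy.

Local Notation Vr := (Vrho P Rc gamma).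
Local Notation drho := (drho P gamma).
Local Notation gradient := (gradV P Rc gamma).

Definition adv (pi p : S -> A -> R) (u : S) : R := \sum_a (p u a - pi u a) * Q pi u a.

Lemma adv_id pi u : adv pi pi u = 0.
Proof. by rewrite /adv big1 // => a _; rewrite subrr mul0r. Qed.

Lemma advE pi p : is_policy pi -> forall u,
  adv pi p u = \sum_a p u a * Q pi u a - V pi u.
Proof.
move=> pi_pol u; rewrite /adv (Vs_Qf pi_pol) -sumrB.
by apply: eq_bigr => a _; rewrite mulrBl.
Qed.

Lemma Vs_perf_diff pi p : is_policy pi -> is_policy p -> forall s,
  V p s - V pi s = \sum_u resolvent p s u * adv pi p u.
Proof.
move=> pi_pol p_pol s.
transitivity (\sum_u resolvent p s u * rpi Rc p u
  + gamma * \sum_u resolvent p s u * \sum_w Ppi P p u w * V pi w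
  - \sum_u resolvent p s u * V pi u).
  by rewrite (resolvent_mulEr p_pol (V pi) s) (Vs_resolvent p_pol s); ring.
rewrite mulr_sumr -big_split -sumrB /=; apply: eq_bigr => u _.
by rewrite advE // sum_Qf; ring.
Qed.

(* The second resolvent identity M' - M = gamma M' (P' - P) M, applied to g. *)
Lemma resolvent_mulB pi p (g : S -> R) : is_policy pi -> is_policy p -> forall s,
  \sum_u resolvent p s u * g u - \sum_u resolvent pi s u * g u =
  gamma * \sum_w resolvent p s w *
    \sum_v (Ppi P p w v - Ppi P pi w v) * \sum_u resolvent pi v u * g u.
Proof.
move=> pi_pol p_pol s; set h := fun v => \sum_u resolvent pi v u * g u.
have hE v : h v = g v + gamma * \sum_w Ppi P pi v w * h w.
  exact: resolvent_mulEl.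
have hs : h s = \sum_w resolvent p s w * h w
                - gamma * \sum_w resolvent p s w * \sum_v Ppi P p w v * h v.
  by rewrite (resolvent_mulEr p_pol h s); ring.
rewrite -/(h s) hs.
transitivity (\sum_w (resolvent p s w * g w - resolvent p s w * h w
                      + gamma * (resolvent p s w * \sum_v Ppi P p w v * h v))).
  by rewrite big_split sumrB /= -mulr_sumr; ring.
rewrite mulr_sumr; apply: eq_bigr => w _.
under [X in _ = _ * (_ * X)]eq_bigr do rewrite mulrBl.
by rewrite sumrB (hE w); ring.
Qed.

Lemma drho_resolvent rho pi u :
  drho rho pi u = (1 - gamma) * \sum_s rho s * resolvent pi s u.
Proof. by rewrite /drho mulr_sumr; apply: eq_bigr => s _; rewrite /dvis mulrCA. Qed.

Lemma drho_ge rho pi : is_dist rho -> is_policy pi -> forall u,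
  (1 - gamma) * rho u <= drho rho pi u.
Proof.
move=> [rho_ge0 _] pi_pol u; rewrite drho_resolvent; apply: ler_wpM2l; first exact: ltW.
rewrite (bigD1 u) //= -[X in X <= _]addr0; apply: lerD.
  by rewrite ler_peMr ?resolvent_diag_ge1.
by apply: sumr_ge0 => s _; rewrite mulr_ge0 ?resolvent_ge0.
Qed.

Lemma mismatch_ge rho pistar Mx : is_dist rho -> is_policy pistar ->
  (forall s, drho rho pistar s <= Mx * rho s) -> 1 - gamma <= Mx.
Proof.
move=> rho_dist ps_pol dM.
have : \sum_s (1 - gamma) * rho s <= \sum_s Mx * rho s.
  by apply: ler_sum => s _; exact: le_trans (drho_ge _ _ rho_dist ps_pol s) (dM s).
by rewrite -!mulr_sumr (proj2 rho_dist) !mulr1.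
Qed.

Lemma Vrho_perf_diff rho pi p : is_policy pi -> is_policy p ->
  Vr rho p - Vr rho pi = (1 - gamma)^-1 * \sum_u drho rho p u * adv pi p u.
Proof.
move=> pi_pol p_pol; rewrite /Vrho -sumrB.
under eq_bigr do rewrite -mulrBr Vs_perf_diff // mulr_sumr.
rewrite exchange_big mulr_sumr /=; apply: eq_bigr => u _.
rewrite drho_resolvent [in RHS]mulrA [in RHS]mulrA mulVf ?gt_eqF // mul1r mulr_suml.
by apply: eq_bigr => s _; rewrite mulrA.
Qed.

Lemma dotp_gradV rho pi p :
  dotp (gradient rho pi) (fun s a => p s a - pi s a) =
  (1 - gamma)^-1 * \sum_u drho rho pi u * adv pi p u.
Proof.
rewrite /dotp mulr_sumr; apply: eq_bigr => u _.
by rewrite /adv !mulr_sumr; apply: eq_bigr => a _; rewrite /gradV; ring.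
Qed.

Lemma norm_adv_le pi p : is_policy pi -> forall u,
  `|adv pi p u| <= l1dist pi p u / (1 - gamma).
Proof.
move=> pi_pol u; apply: norm_sum_mul_le => a.
by rewrite ger0_norm ?Qf_ge0 ?Qf_le.
Qed.

Lemma norm_resolvent_mul_le pi (f : S -> R) C : is_policy pi ->
  (forall u, `|f u| <= C) -> forall s, `|\sum_u resolvent pi s u * f u| <= C / (1 - gamma).
Proof.
move=> pi_pol fC s; apply: le_trans (norm_sum_mul_le _ _ _ fC) _.
have C_ge0 : 0 <= C := le_trans (normr_ge0 _) (fC s).
rewrite mulrC ler_wpM2l //; apply: le_trans (resolvent_row_le pi_pol s).
by apply: ler_sum => u _; rewrite ger0_norm ?resolvent_ge0.
Qed.

Lemma norm_PpiB_mul_le pi p (f : S -> R) C : (forall v, `|f v| <= C) -> forall w,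
  `|\sum_v (Ppi P p w v - Ppi P pi w v) * f v| <= l1dist pi p w * C.
Proof.
move=> fC w.
have -> : \sum_v (Ppi P p w v - Ppi P pi w v) * f v
        = \sum_a (p w a - pi w a) * \sum_v P w a v * f v.
  transitivity (\sum_v \sum_a (p w a - pi w a) * (P w a v * f v)).
    by apply: eq_bigr => v _; rewrite /Ppi -sumrB mulr_suml; apply: eq_bigr => a _; ring.
  by rewrite exchange_big /=; apply: eq_bigr => a _; rewrite mulr_sumr.
apply: norm_sum_mul_le => a; apply: le_trans (norm_sum_mul_le _ _ _ fC) _.
have -> : \sum_v `|P w a v| = 1.
  rewrite -(proj2 (P_dist w a)); apply: eq_bigr => v _.
  by rewrite ger0_norm ?(proj1 (P_dist w a)).
by rewrite mul1r.
Qed.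

Lemma Vrho_second_order rho pi p : is_policy pi -> is_policy p ->
  Vr rho p - Vr rho pi - dotp (gradient rho pi) (fun s a => p s a - pi s a) =
  \sum_s rho s * (gamma * \sum_w resolvent p s w *
     \sum_v (Ppi P p w v - Ppi P pi w v) * \sum_u resolvent pi v u * adv pi p u).
Proof.
move=> pi_pol p_pol.
have -> : Vr rho p - Vr rho pi = \sum_s rho s * \sum_u resolvent p s u * adv pi p u.
  by rewrite /Vrho -sumrB; apply: eq_bigr => s _; rewrite -mulrBr Vs_perf_diff.
have -> : dotp (gradient rho pi) (fun s a => p s a - pi s a)
        = \sum_s rho s * \sum_u resolvent pi s u * adv pi p u.
  rewrite dotp_gradV mulr_sumr.
  transitivity (\sum_u \sum_s rho s * (resolvent pi s u * adv pi p u)).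
    apply: eq_bigr => u _; rewrite drho_resolvent !mulrA mulVf ?gt_eqF // mul1r.
    by rewrite mulr_suml; apply: eq_bigr => s _; rewrite mulrA.
  by rewrite exchange_big /=; apply: eq_bigr => s _; rewrite mulr_sumr.
by rewrite -sumrB; apply: eq_bigr => s _; rewrite -mulrBr resolvent_mulB.
Qed.

Lemma Vrho_smooth rho pi p : is_dist rho -> is_policy pi -> is_policy p ->
  Vr rho p <= Vr rho pi + dotp (gradient rho pi) (fun s a => p s a - pi s a)
              + gamma * #|A|%:R / (1 - gamma) ^+ 3 * sqdist p pi.
Proof.
move=> [rho_ge0 rho1] pi_pol p_pol.
set B := Num.sqrt (#|A|%:R * sqdist p pi).
have B2 : B ^+ 2 = #|A|%:R * sqdist p pi.
  rewrite sqr_sqrtr // mulr_ge0 ?ler0n // sumr_ge0 // => s _.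
  by apply: sumr_ge0 => a _; exact: sqr_ge0.
have adv_le u : `|adv pi p u| <= B / (1 - gamma).
  apply: le_trans (norm_adv_le _ p pi_pol u) _.
  by rewrite ler_wpM2r ?l1dist_le // invr_ge0 ltW.
have h_le := norm_resolvent_mul_le _ _ _ pi_pol adv_le.
have Ph_le w := norm_PpiB_mul_le pi p _ _ h_le w.
have {}Ph_le w : `|\sum_v (Ppi P p w v - Ppi P pi w v) *
                    \sum_u resolvent pi v u * adv pi p u|
                 <= B * (B / (1 - gamma) / (1 - gamma)).
  apply: le_trans (Ph_le w) _; rewrite ler_wpM2r ?l1dist_le //.
  exact: le_trans (normr_ge0 _) (h_le w).
have M_le := norm_resolvent_mul_le _ _ _ p_pol Ph_le.
suff : Vr rho p - Vr rho pi - dotp (gradient rho pi) (fun s a => p s a - pi s a)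
       <= gamma * #|A|%:R / (1 - gamma) ^+ 3 * sqdist p pi by lra.
rewrite Vrho_second_order //; apply: le_trans (ler_norm _) _.
apply: le_trans (norm_sum_mul_le _ _
  (gamma * (B * (B / (1 - gamma) / (1 - gamma)) / (1 - gamma))) _) _.
  move=> s; rewrite normrM ger0_norm ?(ltW gamma_gt0) //.
  by rewrite ler_wpM2l ?(ltW gamma_gt0) ?M_le.
have -> : \sum_s `|rho s| = 1.
  by rewrite -rho1; apply: eq_bigr => s _; rewrite ger0_norm.
have -> : gamma * #|A|%:R / (1 - gamma) ^+ 3 * sqdist p pi
        = 1 * (gamma * (B * (B / (1 - gamma) / (1 - gamma)) / (1 - gamma))).
  transitivity (gamma * B ^+ 2 / (1 - gamma) ^+ 3); first by rewrite B2; ring.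
  by field; rewrite gt_eqF.
by [].
Qed.

Definition greedy pi (a0 : A) s : A := [arg min_(a < a0) Q pi s a]%O.

Definition pgreedy pi a0 : S -> A -> R := fun s a => (greedy pi a0 s == a)%:R.

Lemma Qf_greedy_le pi a0 s a : Q pi s (greedy pi a0 s) <= Q pi s a.
Proof. by rewrite /greedy; case: arg_minP => // b _; apply. Qed.

Lemma pgreedy_policy pi a0 : is_policy (pgreedy pi a0).
Proof.
move=> s; split => [a|]; first by rewrite ler0n.
rewrite -[RHS](sum_delta (fun=> 1) (greedy pi a0 s)).
by apply: eq_bigr => a _; rewrite mulr1.
Qed.

Lemma adv_pgreedy_le pi a0 p : is_policy pi -> is_policy p -> forall u,
  adv pi (pgreedy pi a0) u <= adv pi p u.
Proof.
move=> pi_pol p_pol u; rewrite !advE // lerD2r sum_delta.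
rewrite -[X in X <= _]mul1r -(proj2 (p_pol u)) mulr_suml.
by apply: ler_sum => a _; rewrite ler_wpM2l ?(proj1 (p_pol u)) ?Qf_greedy_le.
Qed.

(* The greedy policy has the smallest advantage at every state, so it can
   replace pistar in the performance difference; [drho pistar <= Mx rho] and
   [(1 - gamma) rho <= drho pi] then change the weights to those of the gradient. *)
Lemma gradient_domination rho pi pistar a0 Mx :
  is_dist rho -> is_policy pi -> is_policy pistar -> 0 < Mx ->
  (forall s, drho rho pistar s <= Mx * rho s) ->
  (1 - gamma) / Mx * (Vr rho pi - Vr rho pistar)
  <= - dotp (gradient rho pi) (fun s a => pgreedy pi a0 s a - pi s a).
Proof.
move=> rho_dist pi_pol ps_pol Mx_gt0 dM.
set g := adv pi (pgreedy pi a0).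
have g_le0 u : 0 <= - g u.
  by rewrite oppr_ge0 -(adv_id pi u) adv_pgreedy_le.
set T := \sum_u drho rho pi u * - g u.
have gap_le : Vr rho pi - Vr rho pistar <= (1 - gamma)^-1 * \sum_u drho rho pistar u * - g u.
  rewrite -opprB Vrho_perf_diff // -mulrN -sumrN.
  apply: ler_wpM2l; first by rewrite invr_ge0 ltW.
  apply: ler_sum => u _; rewrite -mulrN.
  apply: ler_wpM2l; last by rewrite lerN2 adv_pgreedy_le.
  apply: le_trans (drho_ge _ _ rho_dist ps_pol u).
  by rewrite mulr_ge0 ?(proj1 rho_dist) // ltW.
have mismatch : \sum_u drho rho pistar u * - g u <= Mx / (1 - gamma) * T.
  rewrite /T mulr_sumr; apply: ler_sum => u _.
  apply: le_trans (ler_wpM2r (g_le0 u) (dM u)) _.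
  rewrite mulrA ler_wpM2r //.
  have -> : Mx * rho u = Mx / (1 - gamma) * ((1 - gamma) * rho u).
    by field; rewrite gt_eqF.
  by rewrite ler_wpM2l ?(drho_ge _ _ rho_dist pi_pol) // divr_ge0 ?ltW.
have -> : - dotp (gradient rho pi) (fun s a => pgreedy pi a0 s a - pi s a)
        = (1 - gamma)^-1 * T.
  by rewrite dotp_gradV /T -mulrN -sumrN; under [in RHS]eq_bigr do rewrite mulrN.
apply: le_trans (ler_wpM2l _ (le_trans gap_le (ler_wpM2l _ mismatch))) _.
- by rewrite divr_ge0 ?ltW.
- by rewrite invr_ge0 ltW.
by rewrite le_eqVlt; apply/orP; left; apply/eqP; field; rewrite !gt_eqF.
Qed.

Definition pg_step_size : R := (1 - gamma) ^+ 3 / (2 * gamma * #|A|%:R).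

Lemma pg_step rho pistar pi p Mx alpha :
  is_dist rho -> is_policy pistar -> is_policy pi -> (0 < #|A|)%N -> 0 < Mx ->
  (forall s, drho rho pistar s <= Mx * rho s) ->
  is_proj_Pi (fun s a => pi s a - pg_step_size * gradient rho pi s a) p ->
  0 <= alpha <= 1 ->
  Vr rho p - Vr rho pistar
  <= (Vr rho pi - Vr rho pistar) - alpha * ((1 - gamma) / Mx) * (Vr rho pi - Vr rho pistar)
     + 2 * gamma * #|A|%:R * #|S|%:R / (1 - gamma) ^+ 3 * alpha ^+ 2.
Proof.
move=> rho_dist ps_pol pi_pol A_gt0 Mx_gt0 dM proj alpha01.
have /card_gt0P[a0 _] := A_gt0.
have A_pos : 0 < #|A|%:R :> R by rewrite ltr0n.
set G := gradient rho pi; set pg := pgreedy pi a0.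
set q := fun s a => pi s a + alpha * (pg s a - pi s a).
set K := gamma * #|A|%:R / (1 - gamma) ^+ 3.
have eta_gt0 : 0 < pg_step_size by rewrite divr_gt0 ?exprn_gt0 ?mulr_gt0.
have eta_K x : x / (2 * pg_step_size) = K * x.
  by rewrite /K /pg_step_size; field; rewrite !gt_eqF ?mulr_gt0.
have := Vrho_smooth _ _ _ rho_dist pi_pol (proj1 proj).
have := proj_Pi_le _ _ _ _ _ eta_gt0 proj
  (policy_convex _ _ _ pi_pol (pgreedy_policy pi a0) alpha01).
rewrite !eta_K -/q -/K -/G.
have -> : dotp G (fun s a => q s a - pi s a) = alpha * dotp G (fun s a => pg s a - pi s a).
  rewrite /dotp mulr_sumr; apply: eq_bigr => s _.
  by rewrite mulr_sumr; apply: eq_bigr => a _; rewrite /q; ring.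
have -> : sqdist q pi = alpha ^+ 2 * sqdist pg pi.
  rewrite /sqdist mulr_sumr; apply: eq_bigr => s _.
  by rewrite mulr_sumr; apply: eq_bigr => a _; rewrite /q; ring.
have := gradient_domination _ _ _ a0 _ rho_dist pi_pol ps_pol Mx_gt0 dM.
rewrite -/G -/pg => /(ler_wpM2l (proj1 (andP alpha01))).
have K_ge0 : 0 <= K by apply: ltW; rewrite divr_gt0 ?exprn_gt0 ?mulr_gt0.
have : K * (alpha ^+ 2 * sqdist pg pi) <= K * (alpha ^+ 2 * (2 * #|S|%:R)).
  rewrite ler_wpM2l // ler_wpM2l ?sqr_ge0 //.
  exact: sqdist_policy_le (pgreedy_policy pi a0) pi_pol.
rewrite /K; lra.
Qed.

Lemma Vrho_le rho pi : is_dist rho -> is_policy pi -> Vr rho pi <= (1 - gamma)^-1.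
Proof.
move=> [rho_ge0 rho1] pi_pol; apply: le_trans (_ : \sum_s rho s * (1 - gamma)^-1 <= _).
  by apply: ler_sum => s _; rewrite ler_wpM2l ?Vs_le.
by rewrite -mulr_suml rho1 mul1r.
Qed.

Lemma Vrho_ge0 rho pi : is_dist rho -> is_policy pi -> 0 <= Vr rho pi.
Proof.
by move=> [rho_ge0 _] pi_pol; apply: sumr_ge0 => s _; rewrite mulr_ge0 ?Vs_ge0.
Qed.

Section Iterates.
Variables (rho : S -> R) (pistar : S -> A -> R) (pi : nat -> S -> A -> R) (Mx : R).
Hypothesis rho_dist : is_dist rho.
Hypothesis pistar_opt : is_optimal P Rc gamma pistar.
Hypothesis pi0_policy : is_policy (pi 0%N).
Hypothesis mismatch : forall s, drho rho pistar s <= Mx * rho s.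
Hypothesis pg_iterates : forall k,
  is_proj_Pi (fun s a => pi k s a - pg_step_size * gradient rho (pi k) s a) (pi k.+1).

Let pi_policy k : is_policy (pi k).
Proof. by elim: k => // k _; exact: (proj1 (pg_iterates k)). Qed.

Let Mx_gt0 : 0 < Mx.
Proof. exact: lt_le_trans omg_gt0 (mismatch_ge _ _ _ rho_dist pistar_opt.1 mismatch). Qed.

Let S_gt0 : (0 < #|S|)%N. Proof. exact: dist_card_gt0 rho_dist. Qed.

Let A_gt0 : (0 < #|A|)%N.
Proof. by have /card_gt0P[s0 _] := S_gt0; exact: dist_card_gt0 (pi0_policy s0). Qed.

Lemma pg_decrease k :
  Vr rho (pi k.+1) - Vr rho pistar
  <= (Vr rho (pi k) - Vr rho pistar)
     - (1 - gamma) ^+ 5 / (128 * #|S|%:R * #|A|%:R * Mx ^+ 2)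
       * (Vr rho (pi k) - Vr rho pistar) ^+ 2.
Proof.
have S_pos : 0 < #|S|%:R :> R by rewrite ltr0n.
have A_pos : 0 < #|A|%:R :> R by rewrite ltr0n.
have Mx_ge := mismatch_ge _ _ _ rho_dist pistar_opt.1 mismatch.
set dl := Vr rho (pi k) - Vr rho pistar.
set b := (1 - gamma) ^+ 5 / (128 * #|S|%:R * #|A|%:R * Mx ^+ 2).
set c := (1 - gamma) / Mx.
set D := 2 * gamma * #|A|%:R * #|S|%:R / (1 - gamma) ^+ 3.
have dl_ge0 : 0 <= dl.
  rewrite subr_ge0; apply: ler_sum => s _.
  by rewrite ler_wpM2l ?(proj1 rho_dist) ?(pistar_opt.2 _ (pi_policy k)).
have dl_le : dl <= (1 - gamma)^-1.
  have := Vrho_le _ _ rho_dist (pi_policy k).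
  have := Vrho_ge0 _ _ rho_dist pistar_opt.1.
  rewrite /dl; lra.
have c_gt0 : 0 < c by rewrite divr_gt0.
have D_gt0 : 0 < D by rewrite divr_gt0 ?exprn_gt0 ?mulr_gt0.
have b_gt0 : 0 < b by rewrite divr_gt0 ?exprn_gt0 ?mulr_gt0.
have bD : b * (4 * D) <= c ^+ 2.
  have -> : b * (4 * D) = gamma / 16 * c ^+ 2.
    by rewrite /b /D /c; field; rewrite !gt_eqF.
  by rewrite ler_piMl ?sqr_ge0 //; have := gamma_lt1; lra.
have bd : b * dl <= c / 2.
  apply: le_trans (ler_wpM2l (ltW b_gt0) dl_le) _.
  have -> : b * (1 - gamma)^-1 = c / 2 * ((1 - gamma) ^+ 3 / (64 * #|S|%:R * #|A|%:R * Mx)).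
    by rewrite /b /c; field; rewrite !gt_eqF.
  apply: ler_piMr; first by rewrite divr_ge0 ?(ltW c_gt0).
  rewrite ler_pdivrMr ?mulr_gt0 // mul1r.
  have : (1 - gamma) ^+ 3 <= 1 - gamma.
    rewrite exprS; apply: ler_piMr; first exact: ltW.
    by rewrite expr_le1 ?ltW //; have := gamma_gt0; lra.
  have : 1 <= #|S|%:R * #|A|%:R :> R.
    by rewrite -natrM ler1n muln_gt0 S_gt0 A_gt0.
  have := Mx_gt0; nra.
apply: (quadratic_decrease _ _ _ _ _ dl_ge0 (ltW c_gt0) D_gt0 bD bd) => alpha alpha01.
exact: pg_step _ _ _ _ _ _ rho_dist pistar_opt.1 (pi_policy k)
  A_gt0 Mx_gt0 mismatch (pg_iterates k) alpha01.
Qed.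

Lemma pg_rate k : (0 < k)%N ->
  Vr rho (pi k) - Vr rho pistar
  <= 128 * #|S|%:R * #|A|%:R / (k%:R * (1 - gamma) ^+ 5) * (Mx * Mx).
Proof.
move=> k_gt0; have S_pos : 0 < #|S|%:R :> R by rewrite ltr0n.
have A_pos : 0 < #|A|%:R :> R by rewrite ltr0n.
set b := (1 - gamma) ^+ 5 / (128 * #|S|%:R * #|A|%:R * Mx ^+ 2).
have b_gt0 : 0 < b by rewrite divr_gt0 ?exprn_gt0 ?mulr_gt0.
apply: le_trans (decrease_rate (fun k => Vr rho (pi k) - Vr rho pistar) _ b_gt0
  pg_decrease k k_gt0) _.
by rewrite le_eqVlt; apply/orP; left; apply/eqP; rewrite /b; field; rewrite !gt_eqF ?ltr0n.
Qed.

End Iterates.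

End MDP.

Theorem theorem2 (R : realType) (S A : finType)
  (P : S -> A -> S -> R) (Rc : S -> A -> R) (gamma : R)
  (rho : S -> R) (pistar : S -> A -> R) (pi : nat -> S -> A -> R) :
  (forall s a, is_dist (P s a)) ->
  (forall s a, 0 <= Rc s a <= 1) ->
  0 < gamma < 1 ->
  is_dist rho ->
  is_optimal P Rc gamma pistar ->
  is_policy (pi 0%N) ->
  (forall k : nat,
     is_proj_Pi
       (fun s a => pi k s a
          - (1 - gamma) ^+ 3 / (2 * gamma * #|A|%:R) * gradV P Rc gamma rho (pi k) s a)
       (pi k.+1)) ->
  forall k : nat, (1 <= k)%N ->
    ((Vrho P Rc gamma rho (pi k) - Vstar P Rc gamma rho)%:E
     <= (128 * #|S|%:R * #|A|%:R / (k%:R * (1 - gamma) ^+ 5))%:E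
        * (ratio_inf (drho P gamma rho pistar) rho
           * ratio_inf (drho P gamma rho pistar) rho))%E.
Proof.
move=> P_dist Rc01 gamma01 rho_dist opt pi0 pg k k_gt0.
have Vstar_ge : Vrho P Rc gamma rho pistar <= Vstar P Rc gamma rho.
  apply: lb_le_inf; first by exists (Vrho P Rc gamma rho pistar), pistar; first exact: opt.1.
  move=> _ [p p_pol <-]; apply: ler_sum => s _.
  by rewrite ler_wpM2l ?(proj1 rho_dist) ?(opt.2 p p_pol).
have S_gt0 := dist_card_gt0 rho_dist; have /card_gt0P[s0 _] := S_gt0.
have A_gt0 := dist_card_gt0 (pi0 s0).
case: (ratio_infP (drho P gamma rho pistar) rho S_gt0 (proj1 rho_dist)) => [->|[M -> dM]].
  have [gamma_gt0 gamma_lt1] := andP gamma01.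
  rewrite mulyy mulry gtr0_sg ?mul1e ?leey //.
  by rewrite divr_gt0 ?mulr_gt0 ?ltr0n ?exprn_gt0 ?subr_gt0.
rewrite -EFinM lee_fin.
apply: le_trans (pg_rate P_dist Rc01 gamma01 _ _ _ _ rho_dist opt pi0 dM pg _ k_gt0).
by rewrite lerD2l lerN2.
Qed.
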